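(* Let $A \subseteq \mathbb{C}$ be a countable set, and for each $\alpha \in A$ and each integer $s \geq 0$ let $E_{\alpha,s} \subseteq \mathbb{C}$ be a dense subset of $\mathbb{C}$. Then there exists a transcendental entire function $f:\mathbb{C}\to\mathbb{C}$ such that $f^{(s)}(\alpha) \in E_{\alpha,s}$ for all $\alpha \in A$ and all integers $s \geq 0$.
   Context: A transcendental entire function is an entire function $\mathbb{C}\to\mathbb{C}$ that is not a polynomial. $f^{(s)}$ denotes the $s$-th derivative of $f$, with $f^{(0)}=f$. *)

From Stdlib Require Import Reals.
Open Scope R_scope.

Definition Cx : Type := (R * R)%type.
Definition C0 : Cx := (0, 0).
Definition C1 : Cx := (1, 0).
Definition Cadd (z w : Cx) : Cx := (fst z + fst w, snd z + snd w).
Definition Copp (z : Cx) : Cx := (- fst z, - snd z).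
Definition Csub (z w : Cx) : Cx := Cadd z (Copp w).
Definition Cmul (z w : Cx) : Cx :=
  (fst z * fst w - snd z * snd w, fst z * snd w + snd z * fst w).
Definition Cnorm (z : Cx) : R := sqrt (fst z * fst z + snd z * snd z).

Fixpoint Cpow (z : Cx) (n : nat) : Cx :=
  match n with O => C1 | S m => Cmul z (Cpow z m) end.

Fixpoint Csum (c : nat -> Cx) (n : nat) : Cx :=
  match n with O => c O | S m => Cadd (Csum c m) (c (S m)) end.

Definition C_derivable_lim (f : Cx -> Cx) (z l : Cx) : Prop :=
  forall eps : R, 0 < eps -> exists delta : R, 0 < delta /\
    forall h : Cx, 0 < Cnorm h -> Cnorm h < delta ->
      Cnorm (Csub (Csub (f (Cadd z h)) (f z)) (Cmul l h)) <= eps * Cnorm h.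

Definition entire (f : Cx -> Cx) : Prop :=
  forall z : Cx, exists l : Cx, C_derivable_lim f z l.

Definition is_polynomial (f : Cx -> Cx) : Prop :=
  exists (n : nat) (c : nat -> Cx),
    forall z : Cx, f z = Csum (fun k => Cmul (c k) (Cpow z k)) n.

Definition transcendental_entire (f : Cx -> Cx) : Prop :=
  entire f /\ ~ is_polynomial f.

Definition derivatives_of (f : Cx -> Cx) (D : nat -> Cx -> Cx) : Prop :=
  D O = f /\ forall (s : nat) (z : Cx), C_derivable_lim (D s) z (D (S s) z).

Definition countable_set (A : Cx -> Prop) : Prop :=
  exists g : nat -> Cx, forall z : Cx, A z -> exists n : nat, g n = z.

Definition dense_in_C (E : Cx -> Prop) : Prop :=
  forall (z : Cx) (eps : R), 0 < eps -> exists w : Cx, E w /\ Cnorm (Csub w z) < eps.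

(* The function is an entire power series  f(z) = sum_k a_k (z - beta)^k  built
   block by block.  Choose beta outside A (A is countable, R is not) and list
   the shifted points as a sequence p 0, p 1, ... (all nonzero) in which every
   point recurs infinitely often.  At step n, with m the number of earlier
   occurrences of p n, we add  c_n X^(N_n) P_n  where the polynomial P_n kills
   every derivative already fixed at earlier steps (order m at p n, order n at
   the other earlier points) and has nonzero m-th derivative at p n.  Hence
   the m-th derivative at p n depends affinely and non-trivially on c_n, and
   density of the target set lets us choose c_n nonzero and as small as we
   like.  Taking |c_n| tiny makes the coefficients decay superexponentially,
   so the limit is entire; c_n <> 0 makes it transcendental. *)

From Pilot Require Import Defs.
From Stdlib Require Import Reals Lra Lia Psatz.
From Stdlib Require Import Classical ClassicalEpsilon FunctionalExtensionality.
(* Stdlib's Reals also defines a [C1]; make the complex unit of Defs visible again. *)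
Import Pilot.Defs.
Open Scope R_scope.

Lemma Cx_eq (z w : Cx) : fst z = fst w -> snd z = snd w -> z = w.
Proof. destruct z, w; simpl; intros; subst; reflexivity. Qed.

Lemma Cx_ring : ring_theory C0 C1 Cadd Cmul Csub Copp (@eq Cx).
Proof.
  split; intros; apply Cx_eq; unfold Cadd, Cmul, Csub, Copp, C0, C1; simpl; ring.
Qed.
Add Ring CxRing : Cx_ring.

Definition ofR (t : R) : Cx := (t, 0).

(* The l1 norm |Re z| + |Im z|: equivalent to Cnorm and easier to estimate. *)
Definition norm1 (z : Cx) : R := Rabs (fst z) + Rabs (snd z).

Lemma norm1_ge0 z : 0 <= norm1 z.
Proof. unfold norm1; pose proof (Rabs_pos (fst z)); pose proof (Rabs_pos (snd z)); lra. Qed.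

Lemma norm1_add z w : norm1 (Cadd z w) <= norm1 z + norm1 w.
Proof.
  unfold norm1, Cadd; simpl.
  pose proof (Rabs_triang (fst z) (fst w)); pose proof (Rabs_triang (snd z) (snd w)); lra.
Qed.

Lemma norm1_sub z w : norm1 (Csub z w) <= norm1 z + norm1 w.
Proof.
  replace (norm1 w) with (norm1 (Copp w)) by (unfold norm1, Copp; simpl; rewrite !Rabs_Ropp; reflexivity).
  apply norm1_add.
Qed.

Lemma norm1_mul z w : norm1 (Cmul z w) <= norm1 z * norm1 w.
Proof.
  destruct z as [a b], w as [c d]; unfold norm1, Cmul; simpl.
  pose proof (Rabs_triang (a * c) (- (b * d))) as H1; pose proof (Rabs_triang (a * d) (b * c)) as H2.
  rewrite Rabs_Ropp in H1; rewrite !Rabs_mult in H1, H2.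
  pose proof (Rabs_pos a); pose proof (Rabs_pos b); pose proof (Rabs_pos c); pose proof (Rabs_pos d).
  unfold Rminus; nra.
Qed.

Lemma norm1_pow z k : norm1 (Cpow z k) <= norm1 z ^ k.
Proof.
  induction k; simpl.
  - unfold norm1, C1; simpl; rewrite Rabs_R1, Rabs_R0; lra.
  - eapply Rle_trans; [apply norm1_mul|].
    apply Rmult_le_compat_l; [apply norm1_ge0|exact IHk].
Qed.

Lemma norm1_scal (t : R) z : 0 <= t -> norm1 (Cmul (ofR t) z) = t * norm1 z.
Proof.
  intros; unfold norm1, Cmul, ofR; simpl.
  replace (t * fst z - 0 * snd z) with (t * fst z) by ring.
  replace (t * snd z + 0 * fst z) with (t * snd z) by ring.
  rewrite !Rabs_mult, Rabs_right by lra; ring.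
Qed.

Lemma norm1_ofR t : 0 <= t -> norm1 (ofR t) = t.
Proof. intros; unfold norm1, ofR; simpl; rewrite Rabs_R0, Rabs_right; lra. Qed.

Lemma norm1_eq0 z : norm1 z = 0 -> z = C0.
Proof.
  unfold norm1; intros.
  pose proof (Rabs_pos (fst z)); pose proof (Rabs_pos (snd z)).
  apply Cx_eq; simpl; apply NNPP; intro Hne; apply Rabs_pos_lt in Hne; lra.
Qed.

Lemma fst_le_norm1 z : Rabs (fst z) <= norm1 z.
Proof. unfold norm1; pose proof (Rabs_pos (snd z)); lra. Qed.

Lemma snd_le_norm1 z : Rabs (snd z) <= norm1 z.
Proof. unfold norm1; pose proof (Rabs_pos (fst z)); lra. Qed.

Lemma Cnorm_le_norm1 z : Cnorm z <= norm1 z.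
Proof.
  unfold Cnorm, norm1.
  pose proof (Rabs_pos (fst z)); pose proof (Rabs_pos (snd z)).
  apply Rsqr_incr_0_var; [|lra].
  rewrite Rsqr_sqrt by nra; unfold Rsqr.
  assert (Rabs (fst z) * Rabs (fst z) = fst z * fst z)
    by (rewrite <- Rabs_mult; apply Rabs_right; nra).
  assert (Rabs (snd z) * Rabs (snd z) = snd z * snd z)
    by (rewrite <- Rabs_mult; apply Rabs_right; nra).
  nra.
Qed.

Lemma norm1_le_Cnorm z : norm1 z <= 2 * Cnorm z.
Proof.
  assert (Hx : Rabs (fst z) <= Cnorm z).
  { unfold Cnorm; rewrite <- sqrt_Rsqr_abs; apply sqrt_le_1_alt; unfold Rsqr; nra. }
  assert (Hy : Rabs (snd z) <= Cnorm z).
  { unfold Cnorm; rewrite <- sqrt_Rsqr_abs; apply sqrt_le_1_alt; unfold Rsqr; nra. }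
  unfold norm1; lra.
Qed.

Lemma Cnorm_ofR t : 0 <= t -> Cnorm (ofR t) = t.
Proof.
  intros; unfold Cnorm, ofR; simpl.
  replace (t * t + 0 * 0) with (Rsqr t) by (unfold Rsqr; ring).
  apply sqrt_Rsqr; auto.
Qed.

(* Finite sums  u 0 + ... + u (K-1)  (exclusive upper bound). *)

Fixpoint csum (u : nat -> Cx) (K : nat) : Cx :=
  match K with O => C0 | S K => Cadd (csum u K) (u K) end.
Fixpoint rsum (u : nat -> R) (K : nat) : R :=
  match K with O => 0 | S K => rsum u K + u K end.

Lemma rsum_le u v K : (forall k, (k < K)%nat -> u k <= v k) -> rsum u K <= rsum v K.
Proof.
  induction K; simpl; intros H; [lra|].
  assert (rsum u K <= rsum v K) by (apply IHK; intros; apply H; lia).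
  specialize (H K ltac:(lia)); lra.
Qed.

Lemma rsum_nonneg u K : (forall k, 0 <= u k) -> 0 <= rsum u K.
Proof. intros H; induction K; simpl; [lra|]. specialize (H K); lra. Qed.

Lemma rsum_mono u K L : (forall k, 0 <= u k) -> (K <= L)%nat -> rsum u K <= rsum u L.
Proof. intros H HKL; induction HKL; simpl; [lra|]. specialize (H m); lra. Qed.

Lemma rsum_term (u : nat -> R) K i : (forall k, 0 <= u k) -> (i < K)%nat -> u i <= rsum u K.
Proof.
  intros H0; induction K as [|K IH]; intros Hi; [lia|]; simpl.
  destruct (Nat.eq_dec i K) as [->|ne].
  - pose proof (rsum_nonneg u K H0); lra.
  - pose proof (IH ltac:(lia)); pose proof (H0 K); lra.
Qed.

Lemma rsum_scal c u K : rsum (fun k => c * u k) K = c * rsum u K.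
Proof. induction K; simpl; [ring|]. rewrite IHK; ring. Qed.

Lemma rsum_shift u K : rsum u (S K) = u O + rsum (fun k => u (S k)) K.
Proof.
  induction K; [simpl; ring|].
  change (rsum u (S (S K))) with (rsum u (S K) + u (S K)).
  rewrite IHK; simpl; ring.
Qed.

Lemma rsum_geom K : rsum (fun k => (/2)^k) K <= 2.
Proof.
  assert (E : forall K, rsum (fun k => (/2)^k) K = 2 - 2 * (/2)^K).
  { induction K0; simpl; [field|]. rewrite IHK0; field. }
  rewrite E; pose proof (pow_le (/2) K ltac:(lra)); lra.
Qed.

Lemma norm1_csum u K : norm1 (csum u K) <= rsum (fun k => norm1 (u k)) K.
Proof.
  induction K; simpl.
  - unfold norm1, C0; simpl; rewrite Rabs_R0; lra.
  - eapply Rle_trans; [apply norm1_add|]; lra.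
Qed.

Lemma fst_csum u K : fst (csum u K) = rsum (fun k => fst (u k)) K.
Proof. induction K; simpl; auto. rewrite IHK; auto. Qed.

Lemma snd_csum u K : snd (csum u K) = rsum (fun k => snd (u k)) K.
Proof. induction K; simpl; auto. rewrite IHK; auto. Qed.

Lemma abs_bounded_series_cv (u : nat -> R) C :
  (forall K, rsum (fun k => Rabs (u k)) K <= C) -> exists l, Un_cv (rsum u) l.
Proof.
  intros HC. set (T := rsum (fun k => Rabs (u k))).
  assert (Tg : Un_growing T) by (intro n; unfold T; simpl; pose proof (Rabs_pos (u n)); lra).
  assert (Tb : has_ub T) by (exists C; intros x [n ->]; apply HC).
  destruct (growing_cv T Tg Tb) as [lT HT].
  assert (HcT := CV_Cauchy T (exist _ lT HT)).
  assert (Hinc : forall n m, (n <= m)%nat -> Rabs (rsum u m - rsum u n) <= T m - T n).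
  { intros n m H; induction H.
    - unfold Rminus; rewrite !Rplus_opp_r, Rabs_R0; lra.
    - unfold T in *; simpl.
      replace (rsum u m + u m - rsum u n) with ((rsum u m - rsum u n) + u m) by ring.
      eapply Rle_trans; [apply Rabs_triang|]; lra. }
  destruct (R_complete (rsum u)) as [l Hl]; [|exists l; exact Hl].
  intros eps Heps.
  destruct (HcT eps Heps) as [N HN]; exists N; intros n m Hn Hm.
  unfold Rdist in *; destruct (Nat.le_ge_cases n m) as [H|H].
  - specialize (HN m n Hm Hn); rewrite Rabs_minus_sym.
    eapply Rle_lt_trans; [apply (Hinc n m H)|]; eapply Rle_lt_trans; [apply Rle_abs|exact HN].
  - specialize (HN n m Hn Hm).
    eapply Rle_lt_trans; [apply (Hinc m n H)|]; eapply Rle_lt_trans; [apply Rle_abs|exact HN].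
Qed.

Definition Ccv (u : nat -> Cx) (l : Cx) : Prop :=
  Un_cv (fun K => fst (u K)) (fst l) /\ Un_cv (fun K => snd (u K)) (snd l).

Lemma Un_cv_const c : Un_cv (fun _ => c) c.
Proof. intros e He; exists O; intros; unfold Rdist; rewrite Rminus_diag, Rabs_R0; lra. Qed.

Lemma Ccv_const c : Ccv (fun _ => c) c.
Proof. split; apply Un_cv_const. Qed.

Lemma Ccv_sub u v l1 l2 : Ccv u l1 -> Ccv v l2 -> Ccv (fun K => Csub (u K) (v K)) (Csub l1 l2).
Proof. intros [a b] [c d]; split; simpl; apply CV_minus; auto. Qed.

Lemma Ccv_mulc u l c : Ccv u l -> Ccv (fun K => Cmul (u K) c) (Cmul l c).
Proof.
  intros [a b]; split; simpl.
  - apply CV_minus; apply CV_mult; auto; apply Un_cv_const.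
  - apply CV_plus; apply CV_mult; auto; apply Un_cv_const.
Qed.

Lemma Ccv_subseq u l (phi : nat -> nat) :
  (forall m, (m <= phi m)%nat) -> Ccv u l -> Ccv (fun m => u (phi m)) l.
Proof.
  intros Hp [a b]; split; intros e He;
    [destruct (a e He) as [N HN] | destruct (b e He) as [N HN]];
    exists N; intros; apply HN; specialize (Hp n); lia.
Qed.

Lemma Ccv_eventually u l c K0 : Ccv u l -> (forall K, (K0 <= K)%nat -> u K = c) -> l = c.
Proof.
  intros Hc He.
  assert (Hs : Ccv (fun m => u (m + K0)%nat) l) by (apply Ccv_subseq; auto; intro; lia).
  assert (E : (fun m => u (m + K0)%nat) = fun _ => c)
    by (apply functional_extensionality; intro; apply He; lia).
  rewrite E in Hs; destruct Hs as [H1 H2]; destruct (Ccv_const c) as [H3 H4].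
  apply Cx_eq; eapply UL_sequence; eauto.
Qed.

Lemma Ccv_norm1_le u l B : Ccv u l -> (forall K, norm1 (u K) <= B) -> norm1 l <= B.
Proof.
  intros [a b] H.
  assert (Habs : forall v l, Un_cv v l -> Un_cv (fun K => Rabs (v K)) (Rabs l)).
  { intros v l0 Hv e He; destruct (Hv e He) as [N HN]; exists N; intros n Hn.
    unfold Rdist in *; eapply Rle_lt_trans; [apply Rabs_triang_inv2|exact (HN n Hn)]. }
  apply Rle_cv_lim with (Un := fun K => norm1 (u K)) (Vn := fun _ => B); auto.
  - unfold norm1; apply CV_plus; apply Habs; auto.
  - apply Un_cv_const.
Qed.

Definition psum (a : nat -> Cx) (z : Cx) (K : nat) : Cx :=
  csum (fun k => Cmul (a k) (Cpow z k)) K.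

Definition entire_coefs (a : nat -> Cx) : Prop :=
  forall r, 0 <= r -> exists C, forall K, rsum (fun k => norm1 (a k) * r ^ k) K <= C.

Definition Rlim (u : nat -> R) : R := epsilon (inhabits 0) (fun l => Un_cv u l).

Lemma Rlim_spec u : (exists l, Un_cv u l) -> Un_cv u (Rlim u).
Proof. intros H; exact (epsilon_spec (inhabits 0) (fun l => Un_cv u l) H). Qed.

Definition pseries (a : nat -> Cx) (z : Cx) : Cx :=
  (Rlim (fun K => fst (psum a z K)), Rlim (fun K => snd (psum a z K))).

(* The partial sums converge, each component being absolutely convergent. *)
Lemma pseries_cv a z : entire_coefs a -> Ccv (psum a z) (pseries a z).
Proof.
  intros Ha; destruct (Ha (norm1 z) (norm1_ge0 z)) as [C HC].
  assert (Ht : forall k, norm1 (Cmul (a k) (Cpow z k)) <= norm1 (a k) * norm1 z ^ k).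
  { intro k; eapply Rle_trans; [apply norm1_mul|].
    apply Rmult_le_compat_l; [apply norm1_ge0|apply norm1_pow]. }
  split; unfold pseries; simpl; apply Rlim_spec.
  - assert (E : (fun K => fst (psum a z K)) = rsum (fun k => fst (Cmul (a k) (Cpow z k))))
      by (apply functional_extensionality; intro K; apply fst_csum).
    rewrite E; apply (abs_bounded_series_cv _ C); intro K.
    eapply Rle_trans; [|apply (HC K)]; apply rsum_le; intros k _.
    eapply Rle_trans; [apply fst_le_norm1|apply Ht].
  - assert (E : (fun K => snd (psum a z K)) = rsum (fun k => snd (Cmul (a k) (Cpow z k))))
      by (apply functional_extensionality; intro K; apply snd_csum).
    rewrite E; apply (abs_bounded_series_cv _ C); intro K.
    eapply Rle_trans; [|apply (HC K)]; apply rsum_le; intros k _.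
    eapply Rle_trans; [apply snd_le_norm1|apply Ht].
Qed.

Lemma entire_coefs_finite (a : nat -> Cx) K0 :
  (forall k, (K0 <= k)%nat -> a k = C0) -> entire_coefs a.
Proof.
  intros H r Hr; set (f := fun k => norm1 (a k) * r ^ k).
  assert (f0 : forall k, 0 <= f k)
    by (intro; unfold f; apply Rmult_le_pos; [apply norm1_ge0|apply pow_le; auto]).
  exists (rsum f K0); intro K; destruct (Nat.le_ge_cases K K0) as [HK|HK].
  - apply rsum_mono; auto.
  - induction HK; [lra|]; simpl; unfold f at 2; rewrite H by lia.
    unfold norm1, C0; simpl; rewrite Rabs_R0; lra.
Qed.

Definition dcoef (a : nat -> Cx) (k : nat) : Cx := Cmul (ofR (INR (S k))) (a (S k)).

(* The polynomial weights n <= 2^n are absorbed by enlarging the radius. *)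
Lemma INR_le_pow2 n : INR n <= 2 ^ n.
Proof.
  induction n; [simpl; lra|].
  rewrite S_INR; simpl; pose proof (pow_R1_Rle 2 n ltac:(lra)); lra.
Qed.

(* Differentiating term by term keeps the series entire: compare at radius 2(r+1). *)
Lemma entire_coefs_dcoef a : entire_coefs a -> entire_coefs (dcoef a).
Proof.
  intros Ha r Hr; destruct (Ha (2 * (r + 1))) as [C HC]; [lra|].
  exists C; intro K; eapply Rle_trans; [|apply (HC (S K))].
  rewrite rsum_shift.
  apply Rle_trans with (0 + rsum (fun k => norm1 (a (S k)) * (2 * (r + 1)) ^ S k) K).
  2: { apply Rplus_le_compat_r, Rmult_le_pos; [apply norm1_ge0|apply pow_le; lra]. }
  rewrite Rplus_0_l; apply rsum_le; intros k _.
  unfold dcoef; rewrite norm1_scal by apply pos_INR; rewrite Rpow_mult_distr.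
  pose proof (INR_le_pow2 (S k)); pose proof (norm1_ge0 (a (S k))).
  assert (r ^ k <= (r + 1) ^ S k).
  { apply Rle_trans with ((r + 1) ^ k); [apply pow_incr; lra|apply Rle_pow; [lra|lia]]. }
  pose proof (pow_le r k Hr); pose proof (pos_INR (S k)).
  replace (INR (S k) * norm1 (a (S k)) * r ^ k)
    with (norm1 (a (S k)) * (INR (S k) * r ^ k)) by ring.
  apply Rmult_le_compat_l; [lra|]; apply Rmult_le_compat; lra.
Qed.

Lemma entire_coefs_iter s a : entire_coefs a -> entire_coefs (Nat.iter s dcoef a).
Proof. intros Ha; induction s; simpl; auto using entire_coefs_dcoef. Qed.

Definition binom_rem (z h : Cx) (k : nat) : Cx :=
  Csub (Csub (Cpow (Cadd z h) (S k)) (Cpow z (S k)))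
       (Cmul (Cmul (ofR (INR (S k))) (Cpow z k)) h).

Lemma binom_rem_0 z h : binom_rem z h 0 = C0.
Proof. unfold binom_rem; simpl; change (ofR 1) with C1; ring. Qed.

Lemma binom_rem_S z h k : binom_rem z h (S k) =
  Cadd (Cmul (Cadd z h) (binom_rem z h k))
       (Cmul (Cmul (ofR (INR (S k))) (Cpow z k)) (Cmul h h)).
Proof.
  assert (E : ofR (INR (S (S k))) = Cadd (ofR (INR (S k))) C1)
    by (apply Cx_eq; unfold ofR, Cadd, C1; cbv [fst snd]; [rewrite (S_INR (S k))|]; ring).
  unfold binom_rem; rewrite E.
  change (Cpow ?w (S (S k))) with (Cmul w (Cpow w (S k))).
  change (Cpow ?w (S k)) with (Cmul w (Cpow w k)).
  ring.
Qed.

Lemma binom_rem_bound z h k : norm1 h <= 1 ->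
  norm1 (binom_rem z h k) <= INR k ^ 2 * (norm1 z + 1) ^ k * norm1 h ^ 2.
Proof.
  intros Hh; set (rho := norm1 z + 1).
  assert (Hr : 1 <= rho) by (pose proof (norm1_ge0 z); unfold rho; lra).
  pose proof (norm1_ge0 h) as Hh0; set (H := norm1 h ^ 2).
  assert (HH : 0 <= H) by (unfold H; nra).
  induction k.
  - rewrite binom_rem_0; unfold norm1, C0; simpl; rewrite Rabs_R0; lra.
  - rewrite binom_rem_S; eapply Rle_trans; [apply norm1_add|].
    assert (A1 : norm1 (Cmul (Cadd z h) (binom_rem z h k)) <= rho * (INR k ^ 2 * rho ^ k * H)).
    { eapply Rle_trans; [apply norm1_mul|].
      apply Rmult_le_compat; try apply norm1_ge0; auto.
      pose proof (norm1_add z h); unfold rho; lra. }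
    assert (A2 : norm1 (Cmul (Cmul (ofR (INR (S k))) (Cpow z k)) (Cmul h h))
                 <= INR (S k) * rho ^ k * H).
    { eapply Rle_trans; [apply norm1_mul|]; rewrite norm1_scal by apply pos_INR.
      apply Rmult_le_compat.
      - apply Rmult_le_pos; [apply pos_INR|apply norm1_ge0].
      - apply norm1_ge0.
      - apply Rmult_le_compat_l; [apply pos_INR|].
        eapply Rle_trans; [apply norm1_pow|apply pow_incr].
        split; [apply norm1_ge0|unfold rho; lra].
      - eapply Rle_trans; [apply norm1_mul|]; unfold H; simpl; lra. }
    assert (P : rho ^ k <= rho ^ S k) by (apply Rle_pow; [lra|lia]).
    assert (P0 : 0 <= rho ^ k) by (apply pow_le; lra).
    pose proof (pos_INR k); rewrite S_INR in *; simpl (rho ^ S k) in *; simpl (_ ^ 2) in *.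
    assert (INR k * (INR k * 1) * rho ^ k * H * rho
            <= INR k * (INR k * 1) * (rho * rho ^ k) * H) by nra.
    assert ((INR k + 1) * rho ^ k * H <= (2 * INR k + 1) * (rho * rho ^ k) * H)
      by (apply Rmult_le_compat_r; auto; nra).
    nra.
Qed.

Lemma psum_increment a z h K :
  Csub (Csub (psum a (Cadd z h) (S K)) (psum a z (S K))) (Cmul (psum (dcoef a) z K) h)
  = csum (fun k => Cmul (a (S k)) (binom_rem z h k)) K.
Proof.
  induction K; [unfold psum; simpl; ring|].
  change (psum a ?w (S (S K))) with (Cadd (psum a w (S K)) (Cmul (a (S K)) (Cpow w (S K)))).
  change (psum (dcoef a) z (S K))
    with (Cadd (psum (dcoef a) z K) (Cmul (dcoef a K) (Cpow z K))).
  simpl (csum _ (S K)); rewrite <- IHK; unfold binom_rem, dcoef; ring.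
Qed.

(* The factor k^2 in the remainder bound is absorbed by a radius 4 rho. *)
Lemma weight_le_pow k rho : 1 <= rho -> INR k ^ 2 * rho ^ k <= (4 * rho) ^ S k.
Proof.
  intros Hr; rewrite Rpow_mult_distr.
  apply Rmult_le_compat; [apply pow_le, pos_INR|apply pow_le; lra| |apply Rle_pow; [lra|lia]].
  pose proof (INR_le_pow2 k); pose proof (pos_INR k); pose proof (pow_le 2 k ltac:(lra)).
  replace (4 ^ S k) with (4 * (2 ^ k * 2 ^ k))
    by (simpl; rewrite <- Rpow_mult_distr; replace (2 * 2) with 4 by ring; reflexivity).
  simpl; nra.
Qed.

Lemma pseries_increment_bound a z h C : entire_coefs a -> norm1 h <= 1 ->
  (forall K, rsum (fun k => norm1 (a k) * (4 * (norm1 z + 1)) ^ k) K <= C) ->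
  norm1 (Csub (Csub (pseries a (Cadd z h)) (pseries a z)) (Cmul (pseries (dcoef a) z) h))
    <= C * norm1 h ^ 2.
Proof.
  intros Ha Hh HC; set (rho := norm1 z + 1) in HC.
  assert (Hr : 1 <= rho) by (pose proof (norm1_ge0 z); unfold rho; lra).
  assert (H2 : 0 <= norm1 h ^ 2) by (pose proof (norm1_ge0 h); nra).
  apply Ccv_norm1_le with (u := fun K => csum (fun k => Cmul (a (S k)) (binom_rem z h k)) K).
  - assert (E : (fun K => csum (fun k => Cmul (a (S k)) (binom_rem z h k)) K) =
        (fun K => Csub (Csub (psum a (Cadd z h) (S K)) (psum a z (S K)))
                       (Cmul (psum (dcoef a) z K) h)))
      by (apply functional_extensionality; intro K; symmetry; apply psum_increment).
    rewrite E; apply Ccv_sub; [apply Ccv_sub|apply Ccv_mulc; apply pseries_cv; auto using entire_coefs_dcoef];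
      apply Ccv_subseq with (u := psum _ _) (phi := S); auto; apply pseries_cv; auto.
  - intro K; eapply Rle_trans; [apply norm1_csum|].
    apply Rle_trans with (rsum (fun k => norm1 h ^ 2 * (norm1 (a (S k)) * (4 * rho) ^ S k)) K).
    + apply rsum_le; intros k _; eapply Rle_trans; [apply norm1_mul|].
      pose proof (binom_rem_bound z h k Hh) as Hb; fold rho in Hb.
      pose proof (norm1_ge0 (a (S k))); pose proof (weight_le_pow k rho Hr).
      apply Rle_trans with (norm1 (a (S k)) * (INR k ^ 2 * rho ^ k * norm1 h ^ 2));
        [apply Rmult_le_compat_l; auto|].
      replace (norm1 (a (S k)) * (INR k ^ 2 * rho ^ k * norm1 h ^ 2))
        with (norm1 h ^ 2 * (norm1 (a (S k)) * (INR k ^ 2 * rho ^ k))) by ring.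
      apply Rmult_le_compat_l; auto; apply Rmult_le_compat_l; auto.
    + rewrite rsum_scal, Rmult_comm; apply Rmult_le_compat_r; auto.
      eapply Rle_trans; [|apply (HC (S K))]; rewrite rsum_shift.
      pose proof (norm1_ge0 (a O)); simpl (_ ^ 0); lra.
Qed.

Lemma pseries_derivable a z : entire_coefs a ->
  C_derivable_lim (pseries a) z (pseries (dcoef a) z).
Proof.
  intros Ha eps Heps; set (rho := norm1 z + 1).
  assert (Hr : 1 <= rho) by (pose proof (norm1_ge0 z); unfold rho; lra).
  destruct (Ha (4 * rho)) as [C HC]; [lra|].
  assert (C0le : 0 <= C) by (specialize (HC O); simpl in HC; lra).
  exists (Rmin (1/2) (eps / (4 * (C + 1)))); split.
  { apply Rmin_pos; [lra|]; apply Rdiv_lt_0_compat; lra. }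
  intros h Hh0 Hhd.
  assert (Hd1 : Cnorm h < 1/2) by (eapply Rlt_le_trans; [exact Hhd|apply Rmin_l]).
  assert (Hd2 : Cnorm h < eps / (4 * (C + 1))) by (eapply Rlt_le_trans; [exact Hhd|apply Rmin_r]).
  pose proof (norm1_le_Cnorm h); pose proof (norm1_ge0 h).
  pose proof (pseries_increment_bound a z h C Ha ltac:(lra) HC) as B.
  eapply Rle_trans; [apply Cnorm_le_norm1|]; eapply Rle_trans; [exact B|].
  assert (norm1 h ^ 2 <= 4 * Cnorm h * Cnorm h) by (simpl; nra).
  assert (C * (eps / (4 * (C + 1))) <= eps / 4).
  { unfold Rdiv; rewrite <- Rmult_assoc; apply Rmult_le_reg_r with (4 * (C + 1)); [lra|].
    rewrite Rmult_assoc, Rinv_l by lra; field_simplify; nra. }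
  assert (4 * C * Cnorm h <= eps) by nra.
  nra.
Qed.

Lemma pseries_at0 b : entire_coefs b -> pseries b C0 = b O.
Proof.
  intros Hb; apply (Ccv_eventually (psum b C0) _ _ 1 (pseries_cv b C0 Hb)).
  intros K HK; destruct K; [lia|]; clear HK; induction K.
  - unfold psum; simpl; ring.
  - change (psum b C0 (S (S K))) with (Cadd (psum b C0 (S K)) (Cmul (b (S K)) (Cpow C0 (S K)))).
    rewrite IHK; simpl; ring.
Qed.

(* Complex derivatives are unique: test the two limits along real increments. *)
Lemma C_derivable_lim_unique f z l1 l2 :
  C_derivable_lim f z l1 -> C_derivable_lim f z l2 -> l1 = l2.
Proof.
  intros H1 H2; set (d := Csub l1 l2).
  assert (Hd : forall eps, 0 < eps -> norm1 d <= 4 * eps).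
  { intros eps He.
    destruct (H1 eps He) as [d1 [Hd1 P1]]; destruct (H2 eps He) as [d2 [Hd2 P2]].
    set (t := Rmin d1 d2 / 2).
    assert (Ht : 0 < t) by (unfold t; pose proof (Rmin_glb_lt d1 d2 0 Hd1 Hd2); lra).
    assert (Ht1 : t < d1) by (unfold t; pose proof (Rmin_l d1 d2); lra).
    assert (Ht2 : t < d2) by (unfold t; pose proof (Rmin_r d1 d2); lra).
    assert (Hn : Cnorm (ofR t) = t) by (apply Cnorm_ofR; lra).
    specialize (P1 (ofR t) ltac:(lra) ltac:(lra)); specialize (P2 (ofR t) ltac:(lra) ltac:(lra)).
    rewrite Hn in P1, P2.
    set (E1 := Csub (Csub (f (Cadd z (ofR t))) (f z)) (Cmul l1 (ofR t))) in *.
    set (E2 := Csub (Csub (f (Cadd z (ofR t))) (f z)) (Cmul l2 (ofR t))) in *.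
    assert (E : Cmul (ofR t) d = Csub E2 E1) by (unfold E1, E2, d; ring).
    assert (B : norm1 (Cmul (ofR t) d) <= 4 * eps * t).
    { rewrite E; eapply Rle_trans; [apply norm1_sub|].
      pose proof (norm1_le_Cnorm E1); pose proof (norm1_le_Cnorm E2); lra. }
    rewrite norm1_scal in B by lra; apply Rmult_le_reg_l with t; lra. }
  assert (H0 : norm1 d = 0).
  { pose proof (norm1_ge0 d); destruct (Req_dec (norm1 d) 0); auto.
    specialize (Hd (norm1 d / 8) ltac:(lra)); lra. }
  apply norm1_eq0 in H0.
  replace l1 with (Cadd d l2) by (unfold d; ring); rewrite H0; ring.
Qed.

Lemma C_derivable_lim_shift g z beta l : C_derivable_lim g (Csub z beta) l ->
  C_derivable_lim (fun w => g (Csub w beta)) z l.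
Proof.
  intros H eps He; destruct (H eps He) as [d [Hd P]]; exists d; split; auto.
  intros h H1 H2; replace (Csub (Cadd z h) beta) with (Cadd (Csub z beta) h) by ring; auto.
Qed.

(* Coefficients which, from index N_n on, are at most (1/(2(n+1)))^k form an
   entire series: past any radius r only a geometric tail (1/2)^k remains. *)
Lemma entire_coefs_blocks (a : nat -> Cx) (N : nat -> nat) :
  N O = O -> (forall n, (N n < N (S n))%nat) ->
  (forall n k, (N n <= k < N (S n))%nat -> norm1 (a k) <= (/ (2 * INR (S n))) ^ k) ->
  entire_coefs a.
Proof.
  intros HN0 HNS Ha.
  assert (Nmono : forall n m, (n <= m)%nat -> (N n <= N m)%nat).
  { intros n m H; induction H; [lia|]; specialize (HNS m); lia. }
  assert (Hblock : forall k, exists n, (N n <= k < N (S n))%nat).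
  { induction k.
    - exists O; rewrite HN0; specialize (HNS O); lia.
    - destruct IHk as [n Hn]; destruct (Nat.lt_ge_cases (S k) (N (S n))).
      + exists n; lia.
      + exists (S n); specialize (HNS (S n)); lia. }
  intros r Hr; destruct (INR_archimed 1 r ltac:(lra)) as [n0 Hn0].
  set (f := fun k => norm1 (a k) * r ^ k).
  assert (f0 : forall k, 0 <= f k)
    by (intro; unfold f; apply Rmult_le_pos; [apply norm1_ge0|apply pow_le; auto]).
  assert (Htail : forall k, (N n0 <= k)%nat -> f k <= (/2) ^ k).
  { intros k Hk; destruct (Hblock k) as [n Hn].
    assert (n0 <= n)%nat.
    { destruct (Nat.le_gt_cases n0 n); auto; pose proof (Nmono (S n) n0 ltac:(lia)); lia. }
    assert (Hq : 0 < 2 * INR (S n)) by (rewrite S_INR; pose proof (pos_INR n); lra).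
    assert (Hrho : r * / (2 * INR (S n)) <= /2).
    { pose proof (le_INR _ _ H); rewrite S_INR in *.
      apply Rmult_le_reg_r with (2 * (INR n + 1)); [lra|].
      rewrite Rmult_assoc, Rinv_l by lra; field_simplify; lra. }
    unfold f; apply Rle_trans with ((/ (2 * INR (S n))) ^ k * r ^ k).
    - apply Rmult_le_compat_r; [apply pow_le; auto|exact (Ha n k Hn)].
    - rewrite <- Rpow_mult_distr; apply pow_incr; split; [|lra].
      apply Rmult_le_pos; [apply Rlt_le, Rinv_0_lt_compat; lra|lra]. }
  exists (rsum f (N n0) + 2).
  assert (H : forall K, rsum f K <= rsum f (N n0) + rsum (fun k => (/2) ^ k) K).
  { induction K; simpl.
    - pose proof (rsum_nonneg f (N n0) f0); lra.
    - destruct (Nat.lt_ge_cases K (N n0)).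
      + pose proof (rsum_mono f (S K) (N n0) f0 ltac:(lia)).
        pose proof (rsum_nonneg (fun k => (/2) ^ k) (S K) ltac:(intro; apply pow_le; lra)).
        simpl in *; lra.
      + pose proof (Htail K H); lra. }
  intro K; pose proof (H K); pose proof (rsum_geom K); lra.
Qed.

Lemma pow_decr (r : R) m n : 0 <= r <= 1 -> (m <= n)%nat -> r ^ n <= r ^ m.
Proof.
  intros Hr; induction n as [|n IH]; intros H.
  - replace m with O by lia; lra.
  - destruct (Nat.eq_dec m (S n)) as [->|ne]; [lra|].
    pose proof (IH ltac:(lia)); simpl; pose proof (pow_le r n ltac:(lra)); nra.
Qed.

(* The reals are not countable: nested intervals of length (1/3)^n, the n-th
   avoiding u n, shrink to a point outside the range of u. *)
Fixpoint avoid_lo (u : nat -> R) (n : nat) : R :=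
  match n with
  | O => 0
  | S n => if Rlt_dec (avoid_lo u n + (/3) ^ n / 3) (u n) then avoid_lo u n
           else avoid_lo u n + 2 * ((/3) ^ n / 3)
  end.

Lemma real_not_in_seq (u : nat -> R) : exists x, forall n, x <> u n.
Proof.
  set (lo := avoid_lo u); set (L := fun n : nat => (/3) ^ n).
  assert (L0 : forall n, 0 < L n) by (intro; apply pow_lt; lra).
  assert (LS : forall n, L (S n) = L n / 3) by (intro; unfold L; simpl; field).
  (* [lo n, lo n + L n] is a decreasing sequence of intervals, the (n+1)-st missing u n. *)
  assert (Hup : forall n, lo n <= lo (S n)).
  { intro n; unfold lo; simpl; destruct Rlt_dec; [lra|]; pose proof (L0 n); unfold L in *; lra. }
  assert (Hdown : forall n, lo (S n) + L (S n) <= lo n + L n).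
  { intro n; rewrite LS; unfold lo; simpl; destruct Rlt_dec; pose proof (L0 n); unfold L in *; lra. }
  assert (Hmiss : forall n, u n < lo (S n) \/ lo (S n) + L (S n) < u n).
  { intro n; rewrite LS; unfold lo; simpl; destruct Rlt_dec; pose proof (L0 n); unfold L in *; lra. }
  assert (Hmono : forall m n, (m <= n)%nat -> lo m <= lo n).
  { intros m n H; induction H; [lra|]; pose proof (Hup m0); lra. }
  assert (Hnest : forall n m, (n <= m)%nat -> lo m + L m <= lo n + L n).
  { intros n m H; induction H; [lra|]; pose proof (Hdown m); lra. }
  assert (Hall : forall m n, lo m <= lo n + L n).
  { intros m n; destruct (Nat.le_ge_cases m n) as [H|H].
    - pose proof (Hmono m n H); pose proof (L0 n); lra.
    - pose proof (Hnest n m H); pose proof (L0 m); lra. }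
  set (E := fun y => exists m, y = lo m).
  assert (Eb : bound E) by (exists (lo O + L O); intros y [m ->]; apply Hall).
  destruct (completeness E Eb (ex_intro _ (lo O) (ex_intro _ O eq_refl))) as [x [Hub Hlub]].
  exists x; intros n Hx.
  assert (lo (S n) <= x) by (apply Hub; exists (S n); auto).
  assert (x <= lo (S n) + L (S n)) by (apply Hlub; intros y [m ->]; apply Hall).
  destruct (Hmiss n); lra.
Qed.

(* n - isqrt(n)^2 takes every value k at arbitrarily large n (at n = t^2 + k). *)
Definition sqrt_rem (n : nat) : nat := (n - Nat.sqrt n * Nat.sqrt n)%nat.

Lemma sqrt_rem_recurs k T : exists n, (T <= n)%nat /\ sqrt_rem n = k.
Proof.
  set (t := (T + k)%nat); exists (t * t + k)%nat; split; [unfold t; nia|].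
  unfold sqrt_rem; rewrite (Nat.sqrt_unique (t * t + k) t); [lia|unfold t; split; nia].
Qed.

(* Cx as a MathComp field, so that its polynomials [{poly CC}] and their formal
   derivatives are available.  [CC] is a name for Cx carrying these instances;
   its equality and choice structures come classically from [boolp]. *)

From HB Require Import structures.
From mathcomp Require Import all_boot all_algebra boolp.
Set Implicit Arguments. Unset Strict Implicit. Unset Printing Implicit Defensive.

Definition CC : Type := Cx.

HB.instance Definition _ := gen_eqMixin CC.
HB.instance Definition _ := gen_choiceMixin CC.

Lemma CaddA : associative (Cadd : CC -> CC -> CC).
Proof. move=> x y z; apply: Cx_eq; rewrite /Cadd /=; ring. Qed.
Lemma CaddC : commutative (Cadd : CC -> CC -> CC).
Proof. move=> x y; apply: Cx_eq; rewrite /Cadd /=; ring. Qed.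
Lemma Cadd0 : left_id (C0 : CC) Cadd.
Proof. move=> x; apply: Cx_eq; rewrite /Cadd /=; ring. Qed.
Lemma CaddN : left_inverse (C0 : CC) Copp Cadd.
Proof. move=> x; apply: Cx_eq; rewrite /Cadd /=; ring. Qed.
HB.instance Definition _ := GRing.isZmodule.Build CC CaddA CaddC Cadd0 CaddN.

Lemma CmulA : associative (Cmul : CC -> CC -> CC).
Proof. move=> x y z; apply: Cx_eq; rewrite /Cmul /=; ring. Qed.
Lemma CmulC : commutative (Cmul : CC -> CC -> CC).
Proof. move=> x y; apply: Cx_eq; rewrite /Cmul /=; ring. Qed.
Lemma Cmul1 : left_id (C1 : CC) Cmul.
Proof. move=> x; apply: Cx_eq; rewrite /Cmul /=; ring. Qed.
Lemma CmulDl : left_distributive (Cmul : CC -> CC -> CC) Cadd.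
Proof. move=> x y z; apply: Cx_eq; rewrite /Cmul /Cadd /=; ring. Qed.
Lemma C1_neq0 : (C1 : CC) != C0.
Proof. apply/eqP => h; have := f_equal fst h; rewrite /=; lra. Qed.
HB.instance Definition _ := GRing.Zmodule_isComNzRing.Build CC CmulA CmulC Cmul1 CmulDl C1_neq0.

Definition Cinv (z : CC) : CC :=
  (fst z / (fst z * fst z + snd z * snd z), - snd z / (fst z * fst z + snd z * snd z)).

Lemma Cx_sqnorm_neq0 (z : Cx) : z <> C0 -> fst z * fst z + snd z * snd z <> 0.
Proof.
  case: z => [x y] /= hz e; apply: hz.
  have hx : x = 0 by nra. have hy : y = 0 by nra. by rewrite hx hy.
Qed.

Lemma CmulV (x : CC) : x != C0 -> Cmul (Cinv x) x = C1.
Proof.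
  move/eqP=> h; have := Cx_sqnorm_neq0 h; case: x {h} => [a b] /= hn.
  apply: Cx_eq; rewrite /Cmul /Cinv /= /C1 /=; field; exact: hn.
Qed.
Lemma Cinv0 : Cinv C0 = C0.
Proof. apply: Cx_eq; rewrite /Cinv /=; rewrite /Rdiv; ring_simplify; lra. Qed.
HB.instance Definition _ := GRing.ComNzRing_isField.Build CC CmulV Cinv0.

Local Open Scope ring_scope.
Import GRing.Theory.

Lemma CpowE (w : CC) K : Cpow w K = w ^+ K.
Proof. elim: K => [//|K IH]; by rewrite exprS /= IH. Qed.

Lemma natrCC n : (n%:R : CC) = ofR (INR n).
Proof.
  elim: n => [|n IH]; first by apply: Cx_eq.
  rewrite mulrS IH S_INR; change (Cadd C1 (ofR (INR n)) = ofR (INR n + 1)).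
  by apply: Cx_eq; rewrite /= ?Rplus_0_l; ring.
Qed.

Lemma mulrn_neq0 (x : CC) n : x != 0 -> (0 < n)%N -> x *+ n != 0.
Proof.
  move=> hx hn; rewrite -mulr_natr mulf_neq0 //; apply/eqP; rewrite natrCC => h.
  have := f_equal fst h; rewrite /ofR /=.
  have : Rlt 0 (INR n) by apply: lt_0_INR; apply/ltP.
  lra.
Qed.

Lemma derivn_root_factor (a : CC) s : forall m (q : {poly CC}), exists r : {poly CC},
  (('X - a%:P)^+(m + s) * q)^`(s) = ('X - a%:P)^+m * r /\ r.[a] = q.[a] *+ (m + s)^_s.
Proof.
  have deriv_step m (q : {poly CC}) :
    (('X - a%:P)^+m.+1 * q)^`() = ('X - a%:P)^+m * (q *+ m.+1 + ('X - a%:P) * q^`()).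
  { rewrite derivM deriv_exp derivXsubC mul1r /= exprS.
    by rewrite mulrDr mulrnAl mulrnAr mulrA (mulrC ('X - a%:P)). }
  elim: s => [|s IH] m q.
  - by exists q; rewrite addn0 derivn0 ffactn0 mulr1n.
  - have [r [Hr Hra]] := IH m.+1 q.
    exists (r *+ m.+1 + ('X - a%:P) * r^`()); split.
    + by rewrite derivnS addnS -addSn Hr deriv_step.
    + rewrite !hornerE subrr mul0r addr0 hornerMn Hra -mulrnA; congr (_ *+ _).
      by rewrite addnS -addSn ffactnSr addnK.
Qed.

Lemma derivn_root_vanish (a : CC) k s (q : {poly CC}) :
  (s < k)%N -> ((('X - a%:P)^+k * q)^`(s)).[a] = 0.
Proof.
  move=> hsk; have -> : k = ((k - s) + s)%N by rewrite subnK // ltnW.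
  have [r [-> _]] := derivn_root_factor a s (k - s) q.
  by rewrite hornerM horner_exp hornerXsubC subrr expr0n subn_eq0 leqNgt hsk /= mul0r.
Qed.

Lemma derivn_root_top (a : CC) s (q : {poly CC}) :
  ((('X - a%:P)^+s * q)^`(s)).[a] = q.[a] *+ s`!.
Proof.
  have [r [Hr Hra]] := derivn_root_factor a s 0 q.
  by rewrite add0n in Hr Hra; rewrite Hr expr0 mul1r Hra ffactnn.
Qed.

Lemma psum_poly (a : nat -> CC) (w : CC) K : psum a w K = (\poly_(k < K) a k).[w].
Proof.
  rewrite horner_poly; elim: K => [|K IH]; first by rewrite big_ord0.
  by rewrite big_ord_recr /= -IH -CpowE.
Qed.

Lemma dcoef_poly (a : nat -> CC) n : (\poly_(k < n.+1) a k)^`() = \poly_(k < n) (dcoef a k : CC).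
Proof.
  apply/polyP => k; rewrite coef_deriv !coef_poly ltnS.
  case: ifP => h; last by rewrite mul0rn.
  rewrite /dcoef -natrCC; exact: (esym (mulr_natl (a k.+1) k.+1)).
Qed.

Lemma psum_iter s : forall (a : nat -> CC) (w : CC) K,
  psum (Nat.iter s dcoef a) w K = ((\poly_(k < K + s) (a k : CC))^`(s)).[w].
Proof.
  elim: s => [|s IH] a w K; first by rewrite addn0 derivn0 psum_poly.
  by rewrite Nat.iter_succ_r IH derivSn addnS dcoef_poly.
Qed.

Lemma poly_coefs (q : {poly CC}) K : (size q <= K)%N -> \poly_(k < K) q`_k = q.
Proof.
  move=> h; apply/polyP => k; rewrite coef_poly; case: ifP => // hk.
  by rewrite nth_default // (leq_trans h) // leqNgt hk.
Qed.

Lemma Csum_horner (c : nat -> CC) d (z : CC) :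
  Csum (fun k => Cmul (c k) (Cpow z k)) d = (\poly_(k < d.+1) c k).[z].
Proof.
  rewrite -psum_poly /psum; elim: d => [|d IH] /=; first by ring.
  by rewrite IH.
Qed.

Lemma pseries_iter_at0 (a : nat -> CC) s : entire_coefs a ->
  pseries (Nat.iter s dcoef a) C0 = a s *+ s`!.
Proof.
  move=> ha; rewrite pseries_at0; last exact: entire_coefs_iter.
  have := psum_iter s a C0 1; rewrite /psum /=.
  have -> : Cadd C0 (Cmul (Nat.iter s dcoef a O) C1) = Nat.iter s dcoef a O by ring.
  move=> ->; have -> : C0 = 0 :> CC by [].
  by rewrite horner_coef0 coef_derivn addn0 coef_poly add1n ltnSn ffactnn.
Qed.

Lemma poly_derivable (q : {poly CC}) (w : CC) : C_derivable_lim (fun z => q.[z]) w (q^`().[w]).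
Proof.
  set b := fun k => q`_k.
  have hb : entire_coefs b.
    by apply: (entire_coefs_finite b (size q)) => k /leP hk; rewrite /b nth_default.
  have -> : (fun z => q.[z]) = pseries b.
  { apply: functional_extensionality => z; symmetry.
    apply: (Ccv_eventually _ _ _ (size q) (pseries_cv b z hb)) => K /leP hK.
    by rewrite psum_poly poly_coefs. }
  have -> : q^`().[w] = pseries (dcoef b) w.
  { symmetry; apply: (Ccv_eventually _ _ _ (size q) (pseries_cv (dcoef b) w (entire_coefs_dcoef _ hb))).
    move=> K /leP hK; have := psum_iter 1 b w K; rewrite /= => ->.
    by rewrite poly_coefs // addn1 (leq_trans hK). }
  exact: pseries_derivable.
Qed.

(* An entire series with nonzero coefficients of arbitrarily large index is
   not a polynomial function: otherwise all its high derivatives would vanish. *)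
Lemma pseries_not_polynomial (a : nat -> CC) (beta : CC) (D : nat -> CC -> CC) :
  entire_coefs a -> (forall d, exists k, (d < k)%N /\ a k <> C0) ->
  (forall s z, D s z = pseries (Nat.iter s dcoef a) (Csub z beta)) ->
  derivatives_of (D O) D -> ~ is_polynomial (D O).
Proof.
  move=> ha hnz hD [_ hder] [d [c hc]].
  pose Q := \poly_(k < d.+1) (c k : CC).
  have hQ : forall s z, D s z = (Q^`(s)).[z].
  { elim => [|s IH] z.
    - by rewrite hc derivn0 Csum_horner.
    - apply: (C_derivable_lim_unique _ _ _ _ (hder s z)).
      have -> : D s = (fun w => (Q^`(s)).[w]) by apply: functional_extensionality.
      rewrite derivnS; exact: poly_derivable. }
  have [k [hdk hak]] := hnz d.
  have : D k beta = 0.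
    by rewrite hQ derivn_poly0 ?horner0 // (leq_trans (size_poly _ _) hdk).
  rewrite hD; have -> : Csub beta beta = C0 by apply: Cx_eq; rewrite /= ; ring.
  rewrite pseries_iter_at0 // => /eqP; apply/negP.
  by rewrite mulrn_neq0 ?fact_gt0 //; apply/eqP.
Qed.

Lemma iota_split j n : (j < n)%N -> iota 0 n = iota 0 j ++ j :: iota j.+1 (n - j.+1).
Proof.
  move=> h.
  by rewrite -[j.+1]add0n -[_ :: _]/(iota j (1 + (n - j.+1))) -iotaD add1n subnSK // subnKC // ltnW.
Qed.

Local Close Scope ring_scope.

(* Density lets us solve  Sv + c v in Tg  with c nonzero and as small as we like:
   perturb c = t/2 by a term d with |d| <= t/4. *)
Lemma dense_affine_choice (Tg : CC -> Prop) (Sv v : CC) (t : R) :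
  v <> C0 -> 0 < t -> dense_in_C Tg ->
  exists c : CC, c <> C0 /\ norm1 c <= t /\ Tg (Cadd Sv (Cmul c v)).
Proof.
  move=> hv ht hT; set c0 := ofR (t / 2); set z0 := Cadd Sv (Cmul c0 v).
  set M := norm1 (Cinv v); have hM : 0 <= M by apply: norm1_ge0.
  have hr : 0 < t / (8 * (M + 1)) by apply: Rdiv_lt_0_compat; lra.
  have [w [hw hwz]] := hT z0 _ hr.
  set d := Cmul (Csub w z0) (Cinv v).
  have hd : norm1 d <= t / 4.
  { apply: Rle_trans; first exact: norm1_mul.
    have := norm1_le_Cnorm (Csub w z0); rewrite -/M => h1.
    have h2 : M / (M + 1) <= 1.
    { apply: (Rmult_le_reg_r (M + 1)); first lra.
      rewrite /Rdiv Rmult_assoc Rinv_l; lra. }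
    have h3 : 2 * (t / (8 * (M + 1))) * M = t / 4 * (M / (M + 1)) by field; lra.
    nra. }
  exists (Cadd c0 d); split; [|split].
  - move=> h; have := f_equal fst h; rewrite /c0 /ofR /= => e.
    have := fst_le_norm1 d; have := Rle_abs (- fst d); rewrite Rabs_Ropp.
    change (t / 2 + fst d = 0) in e; lra.
  - apply: Rle_trans; first exact: norm1_add.
    rewrite /c0 norm1_ofR; lra.
  - have hv' : Cmul (Cinv v) v = C1 by apply: CmulV; apply/eqP.
    have -> : Cadd Sv (Cmul (Cadd c0 d) v) = w; last exact: hw.
    rewrite /d /z0; move: hv'; move: (Cinv v) => iv hiv.
    transitivity (Cadd w (Cmul (Csub w (Cadd Sv (Cmul c0 v))) (Csub (Cmul iv v) C1))); first ring.
    by rewrite hiv; ring.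
Qed.

Local Open Scope ring_scope.

(* Nodes p n (all nonzero, repetitions allowed)
   and dense targets T n are fixed; step n prescribes the derivative of order
   [prev_count n] (the number of earlier occurrences of p n) at p n. *)

Section Construction.

Variable p : nat -> CC.
Variable T : nat -> CC -> Prop.
Hypothesis p_neq0 : forall n, p n != 0.
Hypothesis T_dense : forall n, dense_in_C (T n).

(* The number of earlier steps j < n with the same node: the order of the
   derivative prescribed at step n. *)
Definition prev_count (n : nat) : nat := count (fun j => p j == p n) (iota 0 n).

(* Vanishes to order [prev_count n] at p n and to order n at the other
   earlier nodes, hence kills every derivative prescribed before step n. *)
Definition node_poly (n : nat) : {poly CC} :=
  ('X - (p n)%:P)^+(prev_count n) * \prod_(j <- iota 0 n | p j != p n) ('X - (p j)%:P)^+n.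

(* The block added at step n; the factor X^N pushes it past earlier coefficients. *)
Definition block (N n : nat) : {poly CC} := 'X^N * node_poly n.

Lemma node_poly_monic n : node_poly n \is monic.
Proof.
  rewrite /node_poly monicMl ?monic_exp ?monicXsubC //.
  by apply: monic_prod => j _; rewrite monic_exp ?monicXsubC.
Qed.

Lemma size_node_poly_gt0 n : (0 < size (node_poly n))%N.
Proof. by rewrite size_poly_gt0 monic_neq0 // node_poly_monic. Qed.

Lemma prev_count_le j : (prev_count j <= j)%N.
Proof. by rewrite /prev_count (leq_trans (count_size _ _)) // size_iota. Qed.

Lemma prev_count_lt j n : (j < n)%N -> p j = p n -> (prev_count j < prev_count n)%N.
Proof.
  move=> hjn hj; rewrite /prev_count (iota_split hjn) count_cat /= hj eqxx.
  by rewrite -addn1 leq_add2l addSn add0n ltnS leq_addr.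
Qed.

Lemma visits_with_count (x : CC) : (forall N, exists n, (N <= n)%N /\ p n = x) ->
  forall s, exists n, p n = x /\ prev_count n = s.
Proof.
  move=> hv; set cnt := fun m => count (fun j => p j == x) (iota 0 m).
  suff H : forall s, exists n, p n = x /\ cnt n = s.
  { move=> s; have [n [h1 h2]] := H s; exists n; split => //.
    by rewrite /prev_count h1. }
  elim => [|s [n [hn hc]]].
  - have hex : exists n, p n == x by have [n [_ h]] := hv O; exists n; apply/eqP.
    case: (ex_minnP hex) => n0 /eqP hn0 hmin; exists n0; split => //.
    apply/eqP; rewrite /cnt eqn0Ngt -has_count; apply/hasPn => j.
    rewrite mem_iota add0n /= => hj; apply/negP => /hmin; by rewrite leqNgt hj.
  - have hex : exists m, (n < m)%N && (p m == x).
      by have [m [h1 h2]] := hv n.+1; exists m; rewrite h1 h2 eqxx.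
    case: (ex_minnP hex) => m /andP [hnm /eqP hm] hmin; exists m; split => //.
    rewrite /cnt (iota_split hnm) count_cat /= hn eqxx -/(cnt n) hc.
    suff -> : count (fun j => p j == x) (iota n.+1 (m - n.+1)) = 0%N
      by rewrite addn0 addn1.
    apply/eqP; rewrite eqn0Ngt -has_count; apply/hasPn => j.
    rewrite mem_iota subnKC // => /andP [h1 h2]; apply/negP => hj.
    by have := hmin j; rewrite h1 hj => /(_ isT); rewrite leqNgt h2.
Qed.

Lemma block_vanish N n j : (j < n)%N -> ((block N n)^`(prev_count j)).[p j] = 0.
Proof.
  move=> hjn; case: (eqVneq (p j) (p n)) => hj.
  - rewrite /block /node_poly mulrCA -hj.
    exact: (derivn_root_vanish _ _ (prev_count_lt hjn hj)).
  - rewrite /block /node_poly -big_filter (bigD1_seq j) /=; last first.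
    + by rewrite filter_uniq // iota_uniq.
    + by rewrite mem_filter hj mem_iota /= add0n hjn.
    rewrite mulrCA [X in _ * X]mulrCA mulrA [X in X * _]mulrC -mulrA mulrCA.
    rewrite [X in (X)^`(_)]mulrCA.
    exact: (derivn_root_vanish _ _ (leq_ltn_trans (prev_count_le j) hjn)).
Qed.

Lemma block_moves N n : ((block N n)^`(prev_count n)).[p n] != 0.
Proof.
  rewrite /block /node_poly mulrCA derivn_root_top mulrn_neq0 ?fact_gt0 //.
  rewrite hornerM hornerXn mulf_neq0 ?expf_neq0 ?p_neq0 //.
  rewrite horner_prod prodf_seq_neq0; apply/allP => j _; apply/implyP => h.
  by rewrite horner_exp hornerXsubC expf_neq0 // subr_eq0 eq_sym.
Qed.

Local Close Scope ring_scope.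

(* The size allowed for c_n: it keeps every coefficient c_n P_n[i], sitting at
   an index k < N_(n+1), below (1/(2(n+1)))^k. *)
Definition coef_tol (n K : nat) (M : R) : R := (/ (2 * INR (S n))) ^ K / (1 + M).

Definition l1_coefs (P : {poly CC}) : R := rsum (fun i => norm1 (P`_i)%R) (size P).

Definition block_coef_for (n : nat) (F : {poly CC}) (N : nat) : CC :=
  epsilon (inhabits C0) (fun c : CC =>
    c <> C0 /\ norm1 c <= coef_tol n (N + size (node_poly n)) (l1_coefs (node_poly n)) /\
    T n (Cadd ((F^`(prev_count n)).[p n])%R (Cmul c ((block N n)^`(prev_count n)).[p n])%R)).

Lemma block_coef_for_spec n F N :
  let c := block_coef_for n F N in
  c <> C0 /\ norm1 c <= coef_tol n (N + size (node_poly n)) (l1_coefs (node_poly n)) /\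
  T n (Cadd ((F^`(prev_count n)).[p n])%R (Cmul c ((block N n)^`(prev_count n)).[p n])%R).
Proof.
  have hv : ((block N n)^`(prev_count n)).[p n]%R <> C0 by apply/eqP; exact: block_moves.
  have ht : 0 < coef_tol n (N + size (node_poly n)) (l1_coefs (node_poly n)).
  { rewrite /coef_tol; apply: Rdiv_lt_0_compat.
    - apply: pow_lt; apply: Rinv_0_lt_compat; have := pos_INR n; rewrite S_INR; lra.
    - have := rsum_nonneg (fun i => norm1 ((node_poly n)`_i)%R) (size (node_poly n))
                (fun i => norm1_ge0 _).
      rewrite /l1_coefs; lra. }
  exact: (epsilon_spec _ _ (dense_affine_choice ((F^`(prev_count n)).[p n])%R hv ht (T_dense n))).
Qed.

Local Open Scope ring_scope.

Definition step (n : nat) (st : {poly CC} * nat) : {poly CC} * nat :=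
  (st.1 + block_coef_for n st.1 st.2 *: block st.2 n, (st.2 + size (node_poly n))%N).

Fixpoint stage (n : nat) : {poly CC} * nat :=
  match n with O => (0, 0%N) | S n' => step n' (stage n') end.

Definition approx (n : nat) : {poly CC} := (stage n).1.
Definition len (n : nat) : nat := (stage n).2.
Definition bcoef (n : nat) : CC := block_coef_for n (approx n) (len n).

(* The coefficients of the limit function: coefficient k is fixed from step k+1 on. *)
Definition limit_coef (k : nat) : CC := (approx k.+1)`_k.

Lemma approxS n : approx n.+1 = approx n + bcoef n *: block (len n) n.
Proof. by []. Qed.

Lemma lenS n : len n.+1 = (len n + size (node_poly n))%N.
Proof. by []. Qed.

Lemma len_lt n : (len n < len n.+1)%N.
Proof. by rewrite lenS -addn1 leq_add2l size_node_poly_gt0. Qed.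

Lemma len_mono n m : (n <= m)%N -> (len n <= len m)%N.
Proof.
  elim: m => [|m IH]; first by rewrite leqn0 => /eqP ->.
  rewrite leq_eqVlt => /orP [/eqP -> //|]; rewrite ltnS => h.
  exact: (leq_trans (IH h) (ltnW (len_lt m))).
Qed.

Lemma len_ge n : (n <= len n)%N.
Proof. elim: n => [//|n IH]; exact: (leq_ltn_trans IH (len_lt n)). Qed.

Lemma block_coefE N n k : (block N n)`_k = if (k < N)%N then 0 else (node_poly n)`_(k - N).
Proof. by rewrite /block coefXnM. Qed.

Lemma approx_high n k : (len n <= k)%N -> (approx n)`_k = 0.
Proof.
  elim: n k => [|n IH] k hk; first by rewrite coef0.
  rewrite approxS coefD coefZ IH; last exact: (leq_trans (ltnW (len_lt n)) hk).
  rewrite block_coefE; move: hk; rewrite lenS => hk.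
  have : ~~ (k < len n)%N by rewrite -leqNgt (leq_trans (leq_addr _ _) hk).
  move/negPf => ->; rewrite nth_default ?mulr0 ?add0r //.
  by rewrite leq_subRL ?(leq_trans (leq_addr _ _) hk) // addnC.
Qed.

Lemma approx_stable n m k : (n <= m)%N -> (k < len n)%N -> (approx m)`_k = (approx n)`_k.
Proof.
  move=> hnm hk; elim: m hnm => [|m IH]; first by rewrite leqn0 => /eqP ->.
  rewrite leq_eqVlt => /orP [/eqP -> //|]; rewrite ltnS => h.
  rewrite approxS coefD coefZ block_coefE (leq_trans hk (len_mono h)).
  by rewrite mulr0 addr0 IH.
Qed.

Lemma limit_coefE n k : (k < len n)%N -> limit_coef k = (approx n)`_k.
Proof.
  move=> hk; rewrite /limit_coef; case: (leqP n k.+1) => h.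
  - by rewrite (approx_stable h hk).
  - by rewrite (approx_stable (ltnW h) (leq_trans (len_ge k.+1) (leqnn _))).
Qed.

Lemma approx_poly n : approx n = \poly_(k < len n) limit_coef k.
Proof.
  apply/polyP => k; rewrite coef_poly; case: ifP => h.
  - by rewrite (limit_coefE h).
  - by rewrite approx_high // leqNgt h.
Qed.

Lemma limit_coef_block n k : (len n <= k < len n.+1)%N ->
  limit_coef k = bcoef n * (node_poly n)`_(k - len n).
Proof.
  case/andP => h1 h2; rewrite (limit_coefE h2) approxS coefD coefZ approx_high // add0r.
  by rewrite block_coefE ltnNge h1.
Qed.

Lemma limit_coef_last n : limit_coef (len n.+1).-1 = bcoef n.
Proof.
  have hs := size_node_poly_gt0 n.
  rewrite (limit_coef_block (n := n)); last first.
    rewrite lenS; apply/andP; split.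
    - by rewrite -ltnS prednK ?addn_gt0 ?hs ?orbT // -addn1 leq_add2l.
    - by rewrite prednK ?addn_gt0 ?hs ?orbT.
  rewrite lenS -subn1 -addnBA // addKn subn1.
  by rewrite -lead_coefE (monicP (node_poly_monic n)) mulr1.
Qed.

Lemma approx_keeps n j : (j < n)%N ->
  ((approx n)^`(prev_count j)).[p j] = ((approx j.+1)^`(prev_count j)).[p j].
Proof.
  elim: n => [//|n IH]; rewrite ltnS leq_eqVlt => /orP [/eqP -> //|h].
  by rewrite approxS derivnD derivnZ hornerD hornerZ block_vanish // mulr0 addr0 IH.
Qed.

Local Close Scope ring_scope.

Lemma bcoef_spec n :
  bcoef n <> C0 /\ norm1 (bcoef n) <= coef_tol n (len n.+1) (l1_coefs (node_poly n)) /\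
  T n (((approx n.+1)^`(prev_count n)).[p n])%R.
Proof.
  have := block_coef_for_spec n (approx n) (len n).
  by rewrite approxS derivnD derivnZ hornerD hornerZ.
Qed.

Lemma limit_coef_bound n k : (len n <= k < len n.+1)%N ->
  norm1 (limit_coef k) <= (/ (2 * INR (S n))) ^ k.
Proof.
  move=> hk; have [_ [hc _]] := bcoef_spec n.
  rewrite (limit_coef_block hk); set P := node_poly n; set i := (k - len n)%N.
  set rho := / (2 * INR (S n)); set M := l1_coefs P.
  have hrho : 0 <= rho <= 1.
  { rewrite /rho; have := pos_INR n; rewrite S_INR => ?; split.
    - apply: Rlt_le; apply: Rinv_0_lt_compat; lra.
    - rewrite -Rinv_1; apply: Rinv_le_contravar; lra. }
  have M0 : 0 <= M by apply: rsum_nonneg => ?; apply: norm1_ge0.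
  have hi : norm1 (P`_i)%R <= M.
  { apply: (rsum_term (fun j => norm1 (P`_j)%R)); first by move=> ?; apply: norm1_ge0.
    apply/ltP; case/andP: hk => h1 h2; rewrite /i ltn_subLR // addnC -lenS //. }
  have hK : rho ^ len n.+1 <= rho ^ k.
  { apply: pow_decr => //; apply/leP; case/andP: hk => _ h2; exact: ltnW. }
  move: hc; rewrite /coef_tol -/rho -/M -/P => hc.
  have hpow : 0 <= rho ^ len n.+1 by apply: pow_le; lra.
  have hM : rho ^ len n.+1 / (1 + M) * M <= rho ^ len n.+1.
  { rewrite /Rdiv Rmult_assoc -[X in _ <= X]Rmult_1_r; apply: Rmult_le_compat_l => //.
    apply: (Rmult_le_reg_l (1 + M)); first lra.
    rewrite -Rmult_assoc Rinv_r; lra. }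
  apply: (Rle_trans _ (norm1 (bcoef n) * norm1 (P`_i)%R)); first exact: norm1_mul.
  have := norm1_ge0 (bcoef n); have := norm1_ge0 (P`_i)%R; nra.
Qed.

Lemma limit_coef_entire : entire_coefs limit_coef.
Proof.
  apply: (@entire_coefs_blocks _ len) => //.
  - by move=> n; apply/ltP; exact: len_lt.
  - move=> n k [h1 h2]; apply: limit_coef_bound; apply/andP; split; [exact/leP|exact/ltP].
Qed.

Lemma pseries_at_node j :
  pseries (Nat.iter (prev_count j) dcoef limit_coef) (p j) =
  (((approx j.+1)^`(prev_count j)).[p j])%R.
Proof.
  set s := prev_count j.
  have hc := pseries_cv _ (p j) (entire_coefs_iter s _ limit_coef_entire).
  have hsj : (s <= j)%N by exact: prev_count_le.
  have hlen m : (s <= len (m + j.+1))%N.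
    by apply: (leq_trans hsj); apply: (leq_trans _ (len_ge _)); rewrite addnS ltnW // ltnS leq_addl.
  set phi := fun m => (len (m + j.+1) - s)%N.
  have hphi m : (m <= phi m)%coq_nat.
  { apply/leP; rewrite /phi leq_subRL //; apply: (leq_trans _ (len_ge _)).
    by rewrite addnC leq_add2l (leq_trans hsj (leqnSn j)). }
  apply: (Ccv_eventually _ _ _ O (Ccv_subseq _ _ phi hphi hc)) => m _.
  rewrite psum_iter /phi subnK // -approx_poly; apply: approx_keeps.
  by rewrite addnS ltnS leq_addl.
Qed.

Theorem interpolating_series :
  [/\ entire_coefs limit_coef,
      (forall d, exists k, (d < k)%N /\ limit_coef k <> C0) &
      (forall n, T n (pseries (Nat.iter (prev_count n) dcoef limit_coef) (p n)))].
Proof.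
  split.
  - exact: limit_coef_entire.
  - move=> d; exists (len d.+2).-1; split; last by rewrite limit_coef_last; case: (bcoef_spec d.+1).
    by case: (len d.+2) (len_ge d.+2).
  - by move=> n; rewrite pseries_at_node; case: (bcoef_spec n) => _ [].
Qed.

End Construction.

Lemma shifted_pseries_derivatives (a : nat -> CC) (beta : CC) : entire_coefs a ->
  derivatives_of (fun z => pseries a (Csub z beta))
                 (fun s z => pseries (Nat.iter s dcoef a) (Csub z beta)).
Proof.
  move=> ha; split => // s z; apply: C_derivable_lim_shift.
  exact: (pseries_derivable _ _ (entire_coefs_iter s _ ha)).
Qed.

Lemma dense_in_C_if (P : Prop) (Tg : CC -> Prop) :
  (P -> dense_in_C Tg) -> dense_in_C (fun w => P -> Tg w).
Proof.
  move=> hd z eps heps; case: (Classical_Prop.classic P) => hP.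
  - by have [w [hw hwz]] := hd hP z eps heps; exists w.
  - exists z; split=> [/hP //|]; rewrite /Cnorm /= !Rplus_opp_r Rmult_0_l Rplus_0_l sqrt_0 //.
Qed.

Lemma Csub_ofR_neq0 (z : CC) (x : R) : fst z <> x -> ((Csub z (ofR x) : CC) != 0)%R.
Proof. move=> hz; apply/eqP => h; apply: hz; have := f_equal fst h; rewrite /= /ofR /=; lra. Qed.

Lemma Csub_inj (z w beta : Cx) : Csub z beta = Csub w beta -> z = w.
Proof.
  move=> h; have -> : z = Cadd (Csub z beta) beta by ring.
  by rewrite h; ring.
Qed.

(* With beta = (x, 0) outside A and an enumeration g of A, the
   nodes p n = g(sqrt_rem n) - beta visit every shifted point of A infinitely
   often; at p n the target of the prescribed derivative, of order s, is
   E (g (sqrt_rem n)) s. *)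
Theorem theorem1 (A : Cx -> Prop) (E : Cx -> nat -> Cx -> Prop)
  (hA : countable_set A)
  (hE : forall (alpha : Cx) (s : nat), A alpha -> dense_in_C (E alpha s)) :
  exists (f : Cx -> Cx) (D : nat -> Cx -> Cx),
    transcendental_entire f /\ derivatives_of f D /\
    (forall (alpha : Cx) (s : nat), A alpha -> E alpha s (D s alpha)).
Proof.
  have [g hg] := hA.
  have [x hx] := real_not_in_seq (fun n => fst (g n)).
  pose p n : CC := Csub (g (sqrt_rem n)) (ofR x).
  pose T n w := A (g (sqrt_rem n)) -> E (g (sqrt_rem n)) (prev_count p n) w.
  have hp n : (p n != 0)%R by apply: Csub_ofR_neq0; apply: not_eq_sym.
  have hT n : dense_in_C (T n) by apply: dense_in_C_if; apply: hE.
  have [ha hnz hint] := interpolating_series hp hT.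
  pose D s z := pseries (Nat.iter s dcoef (limit_coef p T)) (Csub z (ofR x)).
  have hD : derivatives_of (D O) D := shifted_pseries_derivatives (ofR x) ha.
  exists (D O), D; split; [split|split] => //.
  - by move=> z; exists (D 1%nat z); exact: hD.2.
  - exact: (pseries_not_polynomial ha hnz).
  - move=> alpha s hAa; have [k hk] := hg alpha hAa.
    have hv N : exists n, (N <= n)%N /\ p n = Csub alpha (ofR x).
      by have [n [hN hn]] := sqrt_rem_recurs k N; exists n; rewrite /p hn hk; split => //; apply/leP.
    have [n [hpn hcount]] := visits_with_count hv s.
    have hgn : g (sqrt_rem n) = alpha by apply: (Csub_inj hpn).
    by have := hint n; rewrite /T hgn hcount /D -hpn => /(_ hAa).
Qed.
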